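(* For every $n\in\mathbb{N}$, the Fibonacci-sum set-graph $G^F_{A^{(n)}}$ has no pendant vertices (i.e. no vertex of degree exactly $1$).
   Context: Let $\mathcal{F}=\{f_m\}_{m\ge 0}$ be the Fibonacci numbers, $f_0=0$, $f_1=1$, $f_m=f_{m-1}+f_{m-2}$. For $n\in\mathbb{N}$ let $A^{(n)}=\{1,2,\dots,n\}$. The Fibonacci-sum set-graph $G^F_{A^{(n)}}$ is the multigraph (loops and multiple edges allowed) whose vertices are in bijection with the nonempty subsets of $A^{(n)}$ (so it has $2^n-1$ vertices); between the vertices corresponding to distinct subsets $S,T$ there is one edge for each pair $(i',j')$ with $i'\in S$, $j'\in T$, $i'\neq j'$ and $i'+j'\in\mathcal{F}$, and at the vertex corresponding to $S$ there is one loop for each pair of distinct elements $i',j'\in S$ with $i'+j'\in\mathcal{F}$. The degree of a vertex $v$ is $2l(v)+\sum_{u\neq v}\epsilon(v,u)$, where $l(v)$ is the number of loops at $v$ and $\epsilon(v,u)$ the number of edges between $v$ and $u$. *)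

From mathcomp Require Import all_boot zify.
Set Implicit Arguments. Unset Strict Implicit. Unset Printing Implicit Defensive.

Fixpoint fib (m : nat) : nat :=
  match m with
  | 0 => 0
  | 1 => 1
  | (k.+1 as p).+1 => fib p + fib k
  end.

(* Boolean membership in the Fibonacci set F; since fib k >= k - 1, any
   index k with fib k = m satisfies k < m + 2 (see is_fibP). *)
Definition is_fib (m : nat) : bool := [exists k : 'I_(m.+2), fib k == m].

Lemma fib_ge (m : nat) : m <= (fib m).+1.
Proof.
suff H : forall k, k <= (fib k).+1 /\ k.+1 <= (fib k.+1).+1 by case: (H m).
elim=> [|k [IH1 IH2]] //; split=> //.
case: k IH1 IH2 => [|[|k]] IH1 IH2 //.
rewrite [fib _]/=; rewrite [fib k.+3]/= in IH2 *.
move: IH1 IH2; rewrite [fib k.+2]/=; lia.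
Qed.

Lemma is_fibP (m : nat) : reflect (exists k, fib k = m) (is_fib m).
Proof.
apply: (iffP existsP) => [[k /eqP Hk]|[k Hk]]; first by exists k.
have Hlt : k < m.+2 by rewrite -Hk ltnS fib_ge.
by exists (Ordinal Hlt); rewrite /= Hk.
Qed.

(* Ground set A^(n) = {1,...,n} is represented by 'I_n, the element i : 'I_n
   standing for the integer i + 1. Vertices of G^F_{A^(n)} are the nonempty
   S : {set 'I_n}. *)
Definition elt {n} (i : 'I_n) : nat := (nat_of_ord i).+1.

Definition loops {n} (S : {set 'I_n}) : nat :=
  #|[set p : 'I_n * 'I_n |
      [&& p.1 \in S, p.2 \in S, (p.1 < p.2)%N & is_fib (elt p.1 + elt p.2)]]|.

Definition edges {n} (S T : {set 'I_n}) : nat :=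
  #|[set p : 'I_n * 'I_n |
      [&& p.1 \in S, p.2 \in T, p.1 != p.2 & is_fib (elt p.1 + elt p.2)]]|.

Definition degree {n} (S : {set 'I_n}) : nat :=
  2 * loops S + \sum_(T : {set 'I_n} | (T != set0) && (T != S)) edges S T.

From mathcomp Require Import all_boot zify.

(** A pair [i != j] with [i \in S] and [elt i + elt j] Fibonacci either lies
    inside [S], giving a loop at [S], or has [j \notin S], in which case both
    [[set j]] and [j |: S] are neighbours of [S]. Either way the degree is at
    least 2; without such a pair the degree is 0. Neither case uses that [S]
    is nonempty, nor anything about Fibonacci numbers beyond the symmetry of
    the sum. *)

Section FibSetGraphDegree.

Variables (n : nat) (S : {set 'I_n}).

Lemma edges_gt0 {T : {set 'I_n}} {i j : 'I_n} :
  i \in S -> j \in T -> i != j -> is_fib (elt i + elt j) -> 0 < edges S T.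
Proof.
move=> iS jT neq_ij fib_ij; rewrite /edges card_gt0; apply/set0Pn.
by exists (i, j); rewrite inE /= iS jT neq_ij fib_ij.
Qed.

Lemma loops_gt0 {i j : 'I_n} :
  i \in S -> j \in S -> i != j -> is_fib (elt i + elt j) -> 0 < loops S.
Proof.
move=> iS jS neq_ij fib_ij; rewrite /loops card_gt0; apply/set0Pn.
case: (ltngtP i j) => [lt_ij|lt_ji|/val_inj eq_ij].
- by exists (i, j); rewrite inE /= iS jS lt_ij fib_ij.
- by exists (j, i); rewrite inE /= iS jS lt_ji addnC fib_ij.
- by rewrite eq_ij eqxx in neq_ij.
Qed.

Lemma edges_sum_gt1 {i j : 'I_n} :
  i \in S -> j \notin S -> is_fib (elt i + elt j) ->
  1 < \sum_(T : {set 'I_n} | (T != set0) && (T != S)) edges S T.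
Proof.
move=> iS jNS fib_ij.
have neq_ij : i != j by apply: contraNneq jNS => <-.
have j_set1 : j \in [set j] by rewrite set11.
have j_setU1 : j \in j |: S by rewrite setU11.
have set1_nbr : ([set j] != set0) && ([set j] != S).
  by apply/andP; split; apply: contraTneq j_set1 => ->; rewrite ?inE.
have setU1_nbr : (j |: S != set0) && (j |: S != S) && (j |: S != [set j]).
  rewrite -andbA; apply/and3P; split.
  - by apply: contraTneq j_setU1 => ->; rewrite inE.
  - by apply: contraTneq j_setU1 => ->.
  - by apply: contraTneq (setU1r j iS) => ->; rewrite inE.
rewrite (bigD1 [set j] set1_nbr) (bigD1 (j |: S) setU1_nbr) /= addnA.
apply: leq_trans (leq_addr _ _).
by rewrite -[2]/(1 + 1) leq_add // (edges_gt0 iS _ neq_ij).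
Qed.

Lemma degree_gt1 {i j : 'I_n} :
  i \in S -> i != j -> is_fib (elt i + elt j) -> 1 < degree S.
Proof.
move=> iS neq_ij fib_ij; rewrite /degree.
case: (boolP (j \in S)) => [jS | jNS].
- by have := loops_gt0 iS jS neq_ij fib_ij; lia.
- by have := edges_sum_gt1 iS jNS fib_ij; lia.
Qed.

Lemma degree_eq0 :
  (forall i j : 'I_n, i \in S -> i != j -> ~~ is_fib (elt i + elt j)) ->
  degree S = 0.
Proof.
move=> no_pair.
have loops0 : loops S = 0.
  apply/eqP; rewrite cards_eq0; apply/eqP/setP => -[i j]; rewrite !inE /=.
  apply/and4P => -[iS _ lt_ij]; apply/negP/no_pair => //.
  by rewrite neq_ltn lt_ij.
rewrite /degree loops0 big1 // => T _.
apply/eqP; rewrite cards_eq0; apply/eqP/setP => -[i j]; rewrite !inE /=.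
by apply/and4P => -[iS _ neq_ij]; apply/negP/no_pair.
Qed.

Lemma degree_neq1 : degree S != 1.
Proof.
have [/existsP[i /existsP[j /and3P[iS neq_ij fib_ij]]] | no_pair] :=
  boolP [exists i, exists j, [&& i \in S, i != j & is_fib (elt i + elt j)]].
  by rewrite gtn_eqF // (degree_gt1 iS neq_ij fib_ij).
rewrite degree_eq0 // => i j iS neq_ij.
by apply: contra no_pair => fib_ij; apply/existsP; exists i;
  apply/existsP; exists j; rewrite iS neq_ij.
Qed.

End FibSetGraphDegree.

Theorem theorem2p1 (n : nat) (S : {set 'I_n}) :
  S != set0 -> degree S != 1.
Proof. by move=> _; exact: degree_neq1. Qed.
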